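(* Let $q \geq 3$ be an integer, let $p$ be a prime with $p \geq q$, and let $r$ be a power of $p$. Let $\omega_0, \omega_1, \ldots, \omega_{q-1}$ be nonnegative integers with $\omega_0 + \omega_1 + \cdots + \omega_{q-1} = r$. Then for every integer $d_0$ with $1 \leq d_0 \leq r-2$, there exists a $q$-ary constant-composition code $C \subseteq V_{r,[\omega_0,\ldots,\omega_{q-1}]}(q)$ with minimum Hamming distance at least $\mu_p(d_0)+2$ and with $$|C| \;\geq\; \binom{r}{\omega_0,\omega_1,\ldots,\omega_{q-1}} \Big/ r^{d_0-1},$$ where $\binom{r}{\omega_0,\ldots,\omega_{q-1}} = \frac{r!}{\omega_0!\,\omega_1!\cdots\omega_{q-1}!}$ is the multinomial coefficient.
   Context: Let $\mathbb{Z}_q = \{0,1,\ldots,q-1\}$ and let $\mathbb{Z}_q^n$ be the set of $n$-tuples over $\mathbb{Z}_q$. For nonnegative integers $\omega_0,\ldots,\omega_{q-1}$ with sum $n$, $V_{n,[\omega_0,\ldots,\omega_{q-1}]}(q)$ denotes the set of $n$-tuples over $\mathbb{Z}_q$ in which, for each $j \in \{0,\ldots,q-1\}$, the symbol $j$ occurs exactly $\omega_j$ times. A $q$-ary constant-composition code with composition $[\omega_0,\ldots,\omega_{q-1}]$ is a subset of $V_{n,[\omega_0,\ldots,\omega_{q-1}]}(q)$; its minimum distance is the minimum Hamming distance between distinct codewords. For a prime $p$ and positive integer $e$, define $\mu_p(e) = e$ if $p \mid e$, and $\mu_p(e) = e-1$ otherwise. *)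

From mathcomp Require Import all_boot all_order all_algebra.
Set Implicit Arguments. Unset Strict Implicit. Unset Printing Implicit Defensive.

Definition word (n q : nat) := {ffun 'I_n -> 'I_q}.

Definition hamming n q (x y : word n q) : nat := #|[set i | x i != y i]|.

Definition constcomp n q (w : 'I_q -> nat) : {set word n q} :=
  [set x : word n q | [forall j : 'I_q, #|[set i | x i == j]| == w j]].

Definition min_dist_ge n q (C : {set word n q}) (d : nat) : Prop :=
  forall x y, x \in C -> y \in C -> x != y -> d <= hamming x y.

Definition mu (p e : nat) : nat := if p %| e then e else e.-1.

Definition multinomial n q (w : 'I_q -> nat) : nat :=
  n`! %/ \prod_(j < q) (w j)`!.

From mathcomp Require Import all_boot all_order all_algebra all_field zify.
Import GRing.Theory Num.Theory.
Set Implicit Arguments. Unset Strict Implicit. Unset Printing Implicit Defensive.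

(* Label the r = p^k coordinates by the distinct elements a_i of GF(r) and
   attach to a word x its power sums S_j(x) = \sum_i x_i a_i^j.  Some fibre of
   x |-> (S_1, ..., S_(d0-1)) in V_r,w holds at least |V_r,w| / r^(d0-1) words.
   On V_r,w the sum S_0 is constant, and when p | d0 the Frobenius gives
   S_d0 = S_(d0/p)^p, so two words of a fibre share S_0, ..., S_(mu_p(d0)).
   Their difference has entries in the prime field (as q <= p), and a nonzero
   vector with that many vanishing power sums at distinct points has support
   of size at least mu_p(d0) + 2 (Vandermonde). *)

Section Composition.

Variable q : nat.
Implicit Types (w : 'I_q -> nat) (s j : 'I_q).

Definition wtail n (x : word n.+1 q) : word n q := [ffun i => x (lift ord0 i)].

Definition wcons n s (y : word n q) : word n.+1 q :=
  [ffun i => if unlift ord0 i is Some i' then y i' else s].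

Lemma wtail_wcons n s (y : word n q) : wtail (wcons s y) = y.
Proof. by apply/ffunP => i; rewrite !ffunE liftK. Qed.

Lemma wcons_ord0 n s (y : word n q) : wcons s y ord0 = s.
Proof. by rewrite ffunE unlift_none. Qed.

Lemma wconsK n (x : word n.+1 q) : wcons (x ord0) (wtail x) = x.
Proof. by apply/ffunP => i; rewrite !ffunE; case: unliftP => [i' ->|->]; rewrite ?ffunE. Qed.

Lemma wcons_inj n s : injective (@wcons n s).
Proof. exact: can_inj (@wtail_wcons n s). Qed.

Lemma card_letterS n (x : word n.+1 q) j :
  #|[set i | x i == j]| = (x ord0 == j) + #|[set i | wtail x i == j]|.
Proof.
rewrite -!sum1dep_card !big_mkcond big_ord_recl /=; congr (_ + _).
by rewrite [RHS]big_mkcond; apply: eq_bigr => i _; rewrite ffunE.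
Qed.

Definition wdrop w s : 'I_q -> nat := fun j => w j - (s == j).

Lemma wcons_constcomp n w s (y : word n q) : 0 < w s ->
  (wcons s y \in constcomp n.+1 w) = (y \in constcomp n (wdrop w s)).
Proof.
move=> ws; rewrite !inE; apply: eq_forallb => j.
rewrite card_letterS wtail_wcons wcons_ord0 /wdrop.
have [<-|_] := eqVneq s j; last by rewrite add0n subn0.
by rewrite add1n subn1 -{1}(prednK ws) eqSS.
Qed.

Lemma card_constcomp_head n w s :
  #|[set x in constcomp n.+1 w | x ord0 == s]|
    = if w s is 0 then 0 else #|constcomp n (wdrop w s)|.
Proof.
case ws: (w s) => [|m].
  apply/eqP; rewrite cards_eq0; apply/eqP/setP => x; rewrite !inE.
  apply/negP => /andP[/forallP/(_ s)/eqP + /eqP x0].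
  by rewrite card_letterS x0 eqxx ws.
rewrite -(card_imset _ (@wcons_inj n s)); congr #|pred_of_set _|.
have ws0 : 0 < w s by rewrite ws.
apply/setP => x; rewrite inE; apply/andP/imsetP => [[xV /eqP x0]|[y yV ->]].
  exists (wtail x); last by rewrite -x0 wconsK.
  by rewrite -(wcons_constcomp _ ws0) -x0 wconsK.
by rewrite wcons_constcomp // yV wcons_ord0.
Qed.

Lemma sum_wdrop w s : 0 < w s -> \sum_j wdrop w s j = (\sum_j w j).-1.
Proof.
move=> ws; rewrite (bigD1 s) //= [in RHS](bigD1 s) //= /wdrop eqxx subn1.
rewrite -[in RHS](prednK ws) addSn /=; congr (_ + _); apply: eq_bigr => j.
by rewrite eq_sym => /negbTE->; rewrite subn0.
Qed.

Lemma prod_fact_wdrop w s :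
  0 < w s -> \prod_j (w j)`! = w s * \prod_j (wdrop w s j)`!.
Proof.
move=> ws; rewrite (bigD1 s) //= [in RHS](bigD1 s) //= /wdrop eqxx subn1.
rewrite mulnA -[in LHS](prednK ws) factS prednK //; congr (_ * _).
apply: eq_bigr => j.
by rewrite eq_sym => /negbTE->; rewrite subn0.
Qed.

Lemma card_constcomp n w :
  \sum_j w j = n -> #|constcomp n w| * \prod_j (w j)`! = n`!.
Proof.
elim: n w => [|n IHn] w sum_w.
  have w0 j : w j = 0 by apply/eqP; rewrite -leqn0 -sum_w (bigD1 j) ?leq_addr.
  rewrite big1 ?muln1 => [|j _]; last by rewrite w0.
  rewrite (_ : constcomp 0 w = setT) ?cardsT ?card_ffun ?card_ord //.
  by apply/setP => x; rewrite !inE; apply/forallP => j; rewrite w0 -sum1dep_card big_ord0.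
have -> : #|constcomp n.+1 w| = \sum_s #|[set x in constcomp n.+1 w | x ord0 == s]|.
  rewrite -sum1_card (partition_big (fun x : word n.+1 q => x ord0) predT) //=.
  by apply: eq_bigr => s _; rewrite -sum1_card; apply: eq_bigl => x; rewrite !inE.
rewrite factS -[in RHS]sum_w !big_distrl /=; apply: eq_bigr => s _.
rewrite card_constcomp_head; case ws: (w s) => [//|m].
have ws0 : 0 < w s by rewrite ws.
by rewrite -ws (prod_fact_wdrop ws0) mulnCA IHn // sum_wdrop // sum_w.
Qed.

Lemma multinomialE n w : \sum_j w j = n -> multinomial n w = #|constcomp n w|.
Proof.
move=> sum_w; rewrite /multinomial -(card_constcomp sum_w) mulnK //.
by rewrite prodn_gt0 // => j; rewrite fact_gt0.
Qed.

Lemma sum_constcomp n w (x : word n q) :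
  x \in constcomp n w -> \sum_i (x i : nat) = \sum_(j < q) j * w j.
Proof.
rewrite inE => /forallP x_w; rewrite (partition_big x predT) //=.
apply: eq_bigr => j _; rewrite -(eqP (x_w j)) -sum1dep_card big_distrr /=.
by apply: eq_bigr => i /eqP->; rewrite muln1.
Qed.

End Composition.

Lemma pigeonhole_fiber (T U : finType) (A : {set T}) (f : T -> U) (u0 : U) :
  exists u, #|A| <= #|U| * #|[set x in A | f x == u]|.
Proof.
have [u _ u_max] := @arg_maxnP _ u0 predT (fun u => #|[set x in A | f x == u]|) isT.
exists u; rewrite -sum1_card (partition_big f predT) //= -sum_nat_const leq_sum // => v _.
apply: leq_trans (u_max v isT); rewrite -sum1dep_card.
by apply/eq_leq/eq_bigl.
Qed.

Lemma eqr_nat_pchar (R : nzRingType) p a b : p \in [pchar R]%R ->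
  (a%:R == b%:R :> R)%R = (a == b %[mod p]).
Proof.
move=> chR; wlog ab : a b / a <= b.
  by move=> hw; have [/hw//|/ltnW/hw] := leqP a b; rewrite eq_sym [RHS]eq_sym.
by rewrite [RHS]eq_sym eqn_mod_dvd // (dvdn_pcharf chR) natrB // subr_eq0 eq_sym.
Qed.

Section Moments.

Local Open Scope ring_scope.

Variables (F : fieldType) (n : nat) (pos : 'I_n -> F).

Definition moment (z : 'I_n -> F) (j : nat) : F := \sum_i z i * pos i ^+ j.

Lemma momentB z z' j : moment (fun i => z i - z' i) j = moment z j - moment z' j.
Proof. by rewrite /moment -sumrB; apply: eq_bigr => i _; rewrite mulrBl. Qed.

Lemma moment_natr_pchar p (c : 'I_n -> nat) j : p \in [pchar F] ->
  moment (fun i => (c i)%:R) j ^+ p = moment (fun i => (c i)%:R) (j * p).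
Proof.
move=> chF; rewrite -(pFrobenius_autE chF) rmorph_sum; apply: eq_bigr => i _.
by rewrite rmorphM rmorph_nat /= pFrobenius_autE -exprM.
Qed.

(* Pair [z] with the polynomial vanishing on every other point of its support. *)
Lemma sparse_moments_eq0 z t : injective pos ->
  (forall j, (j < t)%N -> moment z j = 0) -> (#|[set i | z i != 0%R]| <= t)%N ->
  forall i, z i = 0.
Proof.
move=> pos_inj z_t supp_t i0; apply/eqP; apply: contraTT supp_t => zi0.
set D := [set i | z i != 0].
pose Q := \prod_(a <- [seq pos i | i in D :\ i0]) ('X - a%:P).
have Q_root i : root Q (pos i) = (i \in D :\ i0).
  rewrite root_prod_XsubC; apply/mapP/idP => [[i' + /pos_inj->]|iD].
    by rewrite mem_enum.
  by exists i; rewrite ?mem_enum.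
have sizeQ : size Q = #|D :\ i0|.+1 by rewrite size_prod_XsubC size_map -cardE.
rewrite -ltnNge (cardsD1 i0 D) inE zi0 add1n -sizeQ ltnNge; apply/negP => Q_t.
have : \sum_i z i * Q.[pos i] = 0.
  transitivity (\sum_(j < size Q) Q`_j * moment z j); last first.
    by rewrite big1 // => j _; rewrite z_t ?mulr0 // (leq_trans (ltn_ord j)).
  rewrite /moment; under [RHS]eq_bigr do rewrite mulr_sumr.
  rewrite [RHS]exchange_big /=; apply: eq_bigr => i _.
  by rewrite horner_coef mulr_sumr; apply: eq_bigr => j _; rewrite mulrCA.
rewrite (bigD1 i0) //= big1 ?addr0 => [/eqP|i ni0].
  by rewrite mulf_eq0 (negbTE zi0) -/(root Q _) Q_root !inE eqxx.
have [->|zi] := eqVneq (z i) 0; first by rewrite mul0r.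
by apply/eqP; rewrite mulf_eq0 -/(root Q _) Q_root !inE ni0 zi orbT.
Qed.

End Moments.

Section SyndromeCode.

Local Open Scope ring_scope.

Variables (F : fieldType) (p q n : nat) (pos : 'I_n -> F).
Hypotheses (charFp : p \in [pchar F]) (q_le_p : (q <= p)%N).

Definition wvec (x : word n q) : 'I_n -> F := fun i => (x i : nat)%:R.

Lemma wvec_eq (x y : word n q) i : (wvec x i == wvec y i) = (x i == y i).
Proof.
by rewrite (eqr_nat_pchar _ _ charFp) !modn_small ?(leq_trans (ltn_ord _) q_le_p).
Qed.

Lemma moment0_constcomp w (x : word n q) : x \in constcomp n w ->
  moment pos (wvec x) 0 = (\sum_(j < q) j * w j)%:R.
Proof.
move=> xw; rewrite /moment -(sum_constcomp xw) natr_sum.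
by apply: eq_bigr => i _; rewrite expr0 mulr1.
Qed.

Lemma constcomp_moments_hamming w d (x y : word n q) : injective pos -> (0 < d)%N ->
  x \in constcomp n w -> y \in constcomp n w -> x != y ->
  (forall j, (0 < j < d)%N -> moment pos (wvec x) j = moment pos (wvec y) j) ->
  (mu p d + 2 <= hamming x y)%N.
Proof.
move=> pos_inj d_gt0 xw yw xy xy_d.
have agree_lt j : (j < d)%N -> moment pos (wvec x) j = moment pos (wvec y) j.
  case: j => [|j] jd; last exact: xy_d.
  by rewrite (moment0_constcomp xw) (moment0_constcomp yw).
have agree_mu j : (j <= mu p d)%N -> moment pos (wvec x) j = moment pos (wvec y) j.
  rewrite /mu; case: ifP => [p_d | _] jd; last by apply: agree_lt; rewrite -(prednK d_gt0).
  move: jd; rewrite leq_eqVlt => /orP[/eqP-> | ]; last exact: agree_lt.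
  rewrite -(divnK p_d) -!(moment_natr_pchar _ _ _ charFp) agree_lt //.
  by rewrite ltn_Pdiv // prime_gt1 // (pcharf_prime charFp).
rewrite leqNgt; apply: contra xy => dist_small.
have diff0 := @sparse_moments_eq0 F n pos (fun i => wvec x i - wvec y i) (mu p d).+1 pos_inj.
apply/eqP/ffunP => i; apply/eqP; rewrite -wvec_eq -subr_eq0; apply/eqP/diff0 => [j j_le|].
  by rewrite momentB agree_mu ?subrr.
have -> : [set i | wvec x i - wvec y i != 0] = [set i | x i != y i].
  by apply/setP => i'; rewrite !inE subr_eq0 wvec_eq.
by rewrite -ltnS -addn2.
Qed.

End SyndromeCode.

Theorem theorem1 (q p k : nat) (w : 'I_q -> nat) (d0 : nat) :
  3 <= q -> prime p -> q <= p ->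
  \sum_(j < q) w j = p ^ k ->
  1 <= d0 <= p ^ k - 2 ->
  exists C : {set word (p ^ k) q},
    [/\ C \subset constcomp (p ^ k) w,
        min_dist_ge C (mu p d0 + 2)
      & ((multinomial (p ^ k) w)%:R / ((p ^ k) ^ (d0 - 1))%:R <= (#|C|%:R : rat))%R].
Proof.
move=> _ p_prime q_le_p sum_w /andP[d0_gt0 d0_le].
have k_gt0 : 0 < k by case: k d0_le {sum_w}; rewrite // expn0; lia.
have [F charFp cardF] := pPrimePowerField p_prime k_gt0.
set n := p ^ k in sum_w d0_le cardF *.
pose pos (i : 'I_n) : F := enum_val (cast_ord (esym cardF) i).
have pos_inj : injective pos by move=> i j /enum_val_inj/cast_ord_inj.
pose syndrome (x : word n q) := [ffun j : 'I_(d0 - 1) => moment pos (wvec F x) j.+1].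
have [s big_fiber] := pigeonhole_fiber (constcomp n w) syndrome [ffun=> 0%R].
exists [set x in constcomp n w | syndrome x == s]; split.
- by apply/subsetP => x; rewrite inE => /andP[].
- move=> x y /setIdP[xw /eqP xs] /setIdP[yw /eqP ys] xy.
  apply: (constcomp_moments_hamming charFp q_le_p pos_inj d0_gt0 xw yw xy).
  move=> j /andP[j_gt0 j_lt]; have j_ord : j.-1 < d0 - 1 by lia.
  have := congr1 (fun f : {ffun _ -> F} => f (Ordinal j_ord)) (etrans xs (esym ys)).
  by rewrite !ffunE /= prednK.
- rewrite multinomialE // ler_pdivrMr ?ltr0n ?expn_gt0 ?prime_gt0 //.
  by rewrite -natrM ler_nat mulnC; move: big_fiber; rewrite card_ffun card_ord cardF.
Qed.
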